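(* Fix an integer $b\ge2$ and let $X$ be the negative definite plumbed 4-manifold with boundary $I_{30(b-2)+19}=Y(b;(2,1),(3,2),(5,1))$ whose plumbing graph has vertices $v_1,\dots,v_5$: $v_5$ central of weight $-b$; $v_1$ of weight $-2$ adjacent only to $v_5$; $v_3$ of weight $-2$ adjacent to $v_5$ and $v_2$; $v_2$ of weight $-2$ adjacent only to $v_3$; $v_4$ of weight $-5$ adjacent only to $v_5$. Let $Q$ be its intersection form in the basis $v_1,\dots,v_5$, let $Q^n$ be the orthogonal sum of $n$ copies, with basis $v^i_1,\dots,v^i_5$ for the $i$-th copy. If $\rho$ is a lattice embedding of $Q^n$ into the standard negative definite lattice $(\mathbb{Z}^{5n},\langle-1\rangle^{5n})$ with standard basis $e_1,\dots,e_{5n}$, then, up to automorphisms of the standard lattice, for $i=1,\dots,n$: $\rho(v_1^i)=e_{1+5(i-1)}-e_{2+5(i-1)}$, $\rho(v_2^i)=e_{3+5(i-1)}-e_{4+5(i-1)}$, $\rho(v_3^i)=e_{4+5(i-1)}-e_{5+5(i-1)}$, and $\rho(v_4^i)=\pm(e_{1+5(\sigma_1(i)-1)}+e_{2+5(\sigma_1(i)-1)})\pm(e_{3+5(\sigma_2(i)-1)}+e_{4+5(\sigma_2(i)-1)}+e_{5+5(\sigma_2(i)-1)})$, for some permutations $\sigma_1,\sigma_2$ of $\{1,\dots,n\}$.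
   Context: $(\mathbb{Z}^{5n},\langle-1\rangle^{5n})$ denotes $\mathbb{Z}^{5n}$ with $e_i\cdot e_j=-\delta_{ij}$; a lattice embedding is an injective homomorphism preserving the pairing. In the intersection form, $v_j\cdot v_j$ is the weight and $v_j\cdot v_k=1$ if adjacent, $0$ otherwise. *)

From mathcomp Require Import all_boot all_order all_algebra all_fingroup.
From mathcomp Require Import zify.
Set Implicit Arguments. Unset Strict Implicit. Unset Printing Implicit Defensive.
Import GRing.Theory Num.Theory.
Local Open Scope ring_scope.

Definition std_form (m : nat) (x y : 'rV[int]_m) : int :=
  - \sum_(t < m) x 0 t * y 0 t.

Definition std_e (m : nat) (t : 'I_m) : 'rV[int]_m := delta_mx 0 t.

Definition std_lattice_aut (m : nat) (P : 'M[int]_m) : Prop :=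
  bijective (fun x : 'rV[int]_m => x *m P) /\
  forall x y : 'rV[int]_m, std_form (x *m P) (y *m P) = std_form x y.

(* Intersection form Q of the plumbing, basis v_1..v_5 indexed 0..4:
   weights -2,-2,-2,-5,-b; edges v1-v5, v3-v5, v2-v3, v4-v5. *)
Definition plumbQ (b : nat) : 'M[int]_5 :=
  \matrix_(k < 5, l < 5)
    if k == l then
      (if val k == 3%N then -5 else if val k == 4%N then - (b%:Z) else -2)
    else
      (if [|| (val k == 0%N) && (val l == 4%N), (val k == 4%N) && (val l == 0%N),
              (val k == 2%N) && (val l == 4%N), (val k == 4%N) && (val l == 2%N),
              (val k == 1%N) && (val l == 2%N), (val k == 2%N) && (val l == 1%N),
              (val k == 3%N) && (val l == 4%N) | (val k == 4%N) && (val l == 3%N)]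
       then 1 else 0).

Definition lattice_embedding_Qn (b n m : nat)
    (rho : 'I_n -> 'I_5 -> 'rV[int]_m) : Prop :=
  (forall c : 'I_n -> 'I_5 -> int,
      \sum_(i < n) \sum_(k < 5) c i k *: rho i k = 0 -> forall i k, c i k = 0) /\
  (forall (i j : 'I_n) (k l : 'I_5),
      std_form (rho i k) (rho j l) = if i == j then plumbQ b k l else 0).

Lemma eidx_proof (n : nat) (i : 'I_n) (k : 'I_5) : (k + 5 * i < 5 * n)%N.
Proof. case: i k => i Hi [k Hk] /=; lia. Qed.

(* 0-based index of e_{(k+1) + 5 i} (i.e. e_{k' + 5(i'-1)} with i' = i+1, k' = k+1) *)
Definition eidx (n : nat) (i : 'I_n) (k : 'I_5) : 'I_(5 * n) :=
  Ordinal (eidx_proof i k).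

Definition sgn (s : bool) : int := (-1) ^+ s.

Definition o0 : 'I_5 := @Ordinal 5 0 isT.
Definition o1 : 'I_5 := @Ordinal 5 1 isT.
Definition o2 : 'I_5 := @Ordinal 5 2 isT.
Definition o3 : 'I_5 := @Ordinal 5 3 isT.
Definition o4 : 'I_5 := @Ordinal 5 4 isT.

Set Warnings "-notation-overridden,-ambiguous-paths".
From mathcomp Require Import all_boot all_order all_algebra all_fingroup zify.
Set Implicit Arguments. Unset Strict Implicit. Unset Printing Implicit Defensive.
Import GRing.Theory Num.Theory.
Local Open Scope ring_scope.

(* The images of v1, v2, v3 are roots (vectors +-e_a +- e_b).  Two orthogonal
   roots sharing a coordinate agree modulo 2, so a vector pairing oddly with
   exactly one of them forces disjoint supports; the plumbing graph provides
   such a vertex for every non-adjacent pair of chain vertices.  Hence the 3n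
   chain roots occupy all 5n coordinates, and a signed permutation of the
   coordinates puts them in standard position.  The image of v4 is orthogonal
   to the chains, so it is constant on each block {1,2} and {3,4,5}; its norm
   5 = 2 + 3 forces a single +-1 on one block of each kind, and since
   2a + 3c = 0 with a, c in {0, +-1} only for a = c = 0, orthogonality between
   copies makes the chosen blocks distinct. *)

Section Roots.

Variable I : finType.
Implicit Types (u w z : I -> int) (P : pred I).

Definition dot u w : int := \sum_t u t * w t.

Definition unit_at u a := u a ^+ 2 = 1 /\ forall t, t != a -> u t = 0.

Definition root_on u a b :=
  [/\ a != b, u a ^+ 2 = 1, u b ^+ 2 = 1 & forall t, t != a -> t != b -> u t = 0].

Lemma sum_sqr_ge0 P u : 0 <= \sum_(t | P t) u t * u t.
Proof. by apply: sumr_ge0 => t _; rewrite -expr2 sqr_ge0. Qed.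

Lemma dot_self_ge0 u : 0 <= dot u u.
Proof. exact: (sum_sqr_ge0 xpredT). Qed.

Lemma unit_at_sqr_le1 u a t : unit_at u a -> u t ^+ 2 <= 1.
Proof. by case=> ua u0; have [->|/u0->] := eqVneq t a; rewrite ?ua ?expr0n. Qed.

Lemma dot_neq0 u w : dot u w != 0 -> exists t, u t * w t != 0.
Proof.
move=> nz; apply/existsP; apply: contraNT nz => /existsPn u_w0.
by apply/eqP/big1 => t _; apply/eqP/negPn/u_w0.
Qed.

Lemma sum_sqr_eq1 P u : \sum_(t | P t) u t * u t = 1 ->
  exists a, [/\ P a, u a ^+ 2 = 1 & forall t, P t -> t != a -> u t = 0].
Proof.
move=> u1; have [a /andP[Pa /eqP ua]] : exists a, P a && (u a != 0).
  apply/existsP; move: u1; apply: contra_eqT => /existsPn u0.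
  by rewrite big1 // => t Pt; move: (u0 t); rewrite Pt negbK => /eqP ->.
move: u1; rewrite (bigD1 a) //=.
have := sum_sqr_ge0 (fun t => P t && (t != a)) u.
set rest := \sum_(t | _) _ => rest_ge0 u1.
have rest0 : rest = 0 by nia.
exists a; split=> [||t Pt ta]; [done | nia |].
have sq_ge0 s : P s && (s != a) -> 0 <= u s * u s by rewrite -expr2 sqr_ge0.
have /(_ t) := psumr_eq0P sq_ge0 rest0; rewrite Pt ta => /(_ isT) /eqP.
by rewrite mulf_eq0 orbb => /eqP.
Qed.

Lemma unit_atP u : dot u u = 1 -> exists a, unit_at u a.
Proof. by case/(@sum_sqr_eq1 xpredT) => a [_ ua u0]; exists a; split=> // t; apply: u0. Qed.

Lemma dot_unit_at u w a : unit_at u a -> dot u w = u a * w a.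
Proof.
case=> _ u0; rewrite /dot (bigD1 a) //= big1 ?addr0 // => t ta.
by rewrite u0 ?mul0r.
Qed.

Lemma dot_root_on u w a b : root_on u a b -> dot u w = u a * w a + u b * w b.
Proof.
case=> ab _ _ u0; rewrite /dot (bigD1 a) //= (bigD1 b) 1?eq_sym //=.
by rewrite big1 ?addr0 // => t /andP[ta tb]; rewrite u0 ?mul0r.
Qed.

Lemma root_onP u t : dot u u = 2 -> u t != 0 -> exists b, root_on u t b.
Proof.
rewrite /dot (bigD1 t) //= => u2 /eqP ut.
move: u2; have := sum_sqr_ge0 (fun s => s != t) u.
set rest := \sum_(s | _) _ => rest_ge0 u2.
have ut_bnd : (u t <= 1) /\ (-1 <= u t) by nia.
have ut1 : u t ^+ 2 = 1 by nia.
have /sum_sqr_eq1 [b [bt ub u0]] : rest = 1 by nia.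
by exists b; split; rewrite // eq_sym.
Qed.

Lemma root_exists u : dot u u = 2 -> exists a b, root_on u a b.
Proof.
move=> u2; have [a] : exists a, u a * u a != 0 by apply: dot_neq0; rewrite u2.
by rewrite mulf_eq0 orbb => /(root_onP u2) [b]; exists a, b.
Qed.

Lemma roots_disjoint u w z t : dot u u = 2 -> dot w w = 2 -> dot u w = 0 ->
  ~~ (2 %| dot z u + dot z w)%Z -> u t * w t = 0.
Proof.
move=> uu ww uw odd_zuw; apply/eqP; apply: contraNT odd_zuw.
rewrite mulf_eq0 negb_or => /andP[ut wt].
have [a ru] := root_onP uu ut; have [ta ut1 ua1 u0] := ru.
have [a' [ta' wt1 wa1 w0]] := root_onP ww wt.
have a'a : a' = a.
  apply/eqP; apply: contraT => a'_neq_a; move: uw.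
  by rewrite (dot_root_on _ ru) (w0 a) 1?eq_sym //; nia.
subst a'; have even_uw s : (2 %| u s - w s)%Z.
  have [->|st] := eqVneq s t; first by nia.
  have [->|sa] := eqVneq s a; first by nia.
  by rewrite u0 // w0.
have : (2 %| dot z u - dot z w)%Z.
  by rewrite /dot -sumrB rpred_sum // => s _; rewrite -mulrBr dvdz_mull.
by lia.
Qed.

Lemma support_apart u w p q : u p ^+ 2 = 1 -> w q ^+ 2 = 1 ->
  (forall t, u t * w t = 0) -> p != q.
Proof. by move=> up wq uw0; apply/eqP => pq; move: (uw0 p); rewrite pq in up *; nia. Qed.

Lemma roots_dotN1 u w : dot u u = 2 -> dot w w = 2 -> dot u w = -1 ->
  exists a d f, [/\ root_on u d a, root_on w d f, a != f & u d * w d = -1].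
Proof.
move=> uu ww uw; have [d] : exists d, u d * w d != 0 by apply: dot_neq0; rewrite uw.
rewrite mulf_eq0 negb_or => /andP[ud wd].
have [a ua] := root_onP uu ud; have [f wf] := root_onP ww wd.
have [da ud1 ua1 _] := ua; have [df wd1 wf1 w0] := wf.
have af : a != f.
  apply: contra_eqN uw => /eqP af; rewrite (dot_root_on _ ua) af.
  by move: ua1; rewrite af; nia.
have udwd : u d * w d = -1.
  have wa0 : w a = 0 by rewrite w0 // eq_sym.
  by move: uw; rewrite (dot_root_on _ ua) wa0 mulr0 addr0.
by exists a, d, f.
Qed.

End Roots.

Section StdLattice.

Variable m : nat.
Implicit Types (x y : 'rV[int]_m) (P : 'M[int]_m) (p q : 'I_m) (s : 'S_m) (eps : 'I_m -> int).

Lemma std_formE x y : std_form x y = - (x *m y^T) 0 0.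
Proof. by rewrite /std_form mxE; congr (- _); apply: eq_bigr => t _; rewrite mxE. Qed.

Lemma std_form_e_sub x p q : std_form x (std_e p - std_e q) = x 0 q - x 0 p.
Proof. by rewrite std_formE /std_e raddfB /= mulmxBr !trmx_delta -!colE !mxE opprB. Qed.

Lemma row_root_onE x a b : root_on (x 0) a b -> x = x 0 a *: std_e a + x 0 b *: std_e b.
Proof.
case=> ab _ _ x0; apply/rowP => t; rewrite !mxE eqxx /=.
have [->|ta] := eqVneq t a; first by rewrite (negbTE ab) mulr0 addr0 mulr1.
have [->|tb] := eqVneq t b; first by rewrite mulr0 add0r mulr1.
by rewrite x0 // !mulr0 addr0.
Qed.

Lemma scale_e_sub_entryl (a b : int) p q : p != q -> (a *: std_e p - b *: std_e q) 0 p = a.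
Proof. by move=> pq; rewrite !mxE !eqxx /= (negbTE pq) mulr1 mulr0 subr0. Qed.

Lemma scale_e_sub_entryr (a b : int) p q : p != q -> (a *: std_e p - b *: std_e q) 0 q = - b.
Proof. by move=> pq; rewrite !mxE !eqxx /= eq_sym (negbTE pq) mulr1 mulr0 sub0r. Qed.

Definition signed_perm_mx s eps : 'M[int]_m := \matrix_(r, c) (eps c *+ (r == s c)).

Lemma std_e_mul_signed_perm s eps c :
  std_e (s c) *m signed_perm_mx s eps = eps c *: std_e c.
Proof.
rewrite -rowE; apply/rowP => d; rewrite !mxE eqxx (inj_eq perm_inj) eq_sym.
by have [->|] := eqVneq c d; rewrite ?mulr1 ?mulr0.
Qed.

Lemma signed_perm_mx_orthogonal s eps : (forall c, eps c ^+ 2 = 1) ->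
  signed_perm_mx s eps *m (signed_perm_mx s eps)^T = 1%:M.
Proof.
move=> eps1; apply/matrixP => r r'; rewrite !mxE (bigD1 (s^-1 r)%g) //= !mxE permKV eqxx.
rewrite big1 => [|c cr]; last first.
  by rewrite !mxE -(inj_eq (@perm_inj _ s^-1%g)) permK eq_sym (negbTE cr) mulr0n mul0r.
by rewrite addr0 eq_sym; case: (r == r'); rewrite /= ?mulr0 // -expr2 eps1.
Qed.

Lemma std_lattice_aut_orthogonal P : P *m P^T = 1%:M -> std_lattice_aut P.
Proof.
move=> PPt; split.
  by exists (fun y => y *m P^T) => x; rewrite -mulmxA ?PPt ?(mulmx1C PPt) mulmx1.
by move=> x y; rewrite !std_formE trmx_mul mulmxA -(mulmxA x) PPt mulmx1.
Qed.

End StdLattice.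

Lemma ord5P (k : 'I_5) : k = o0 \/ k = o1 \/ k = o2 \/ k = o3 \/ k = o4.
Proof.
by case: k => -[|[|[|[|[|//]]]]] k_lt; [left|right; left|do 2 right; left
  |do 3 right; left|do 4 right]; apply/val_inj.
Qed.

Section Blocks.

Variable n : nat.
Implicit Types (i j : 'I_n) (k l : 'I_5) (t : 'I_(5 * n)) (a c : 'I_n -> int)
  (x : 'rV[int]_(5 * n)).

Lemma eidx_block_proof t : (t %/ 5 < n)%N.
Proof. by have := ltn_ord t; lia. Qed.

Definition eidx_block t : 'I_n := Ordinal (eidx_block_proof t).
Definition eidx_offset t : 'I_5 := Ordinal (@ltn_pmod t 5 isT).

Lemma eidx_block_offset t : eidx (eidx_block t) (eidx_offset t) = t.
Proof. by apply/val_inj => /=; rewrite addnC mulnC -divn_eq. Qed.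

Lemma eidx_blockK i k : eidx_block (eidx i k) = i.
Proof. by apply/val_inj => /=; have := ltn_ord k; lia. Qed.

Lemma eidx_offsetK i k : eidx_offset (eidx i k) = k.
Proof. by apply/val_inj => /=; have := ltn_ord k; lia. Qed.

Lemma eidx_eq i j k l : (eidx i k == eidx j l) = (i == j) && (k == l).
Proof.
apply/eqP/andP => [e|[/eqP-> /eqP->] //].
by split; apply/eqP; [rewrite -(eidx_blockK i k) e eidx_blockK
                     | rewrite -(eidx_offsetK i k) e eidx_offsetK].
Qed.

Lemma sum_eidx (F : 'I_(5 * n) -> int) : \sum_t F t = \sum_j \sum_k F (eidx j k).
Proof.
rewrite pair_big /= (reindex (fun p : 'I_n * 'I_5 => eidx p.1 p.2)) //.
exists (fun t => (eidx_block t, eidx_offset t)) => [[j k] _ | t _] /=.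
  by rewrite eidx_blockK eidx_offsetK.
exact: eidx_block_offset.
Qed.

Lemma eidx_perm (S : 'I_n -> 'I_5 -> 'I_(5 * n)) :
  (forall i j k l, S i k = S j l -> i = j /\ k = l) ->
  exists pi : 'S_(5 * n), forall i k, pi (eidx i k) = S i k.
Proof.
move=> S_inj; pose f t := S (eidx_block t) (eidx_offset t).
have f_inj : injective f.
  by move=> t t' /S_inj[e1 e2]; rewrite -(eidx_block_offset t) e1 e2 eidx_block_offset.
by exists (perm f_inj) => i k; rewrite permE /f eidx_blockK eidx_offsetK.
Qed.

Definition blockv a c : 'rV[int]_(5 * n) :=
  \row_t (if (eidx_offset t < 2)%N then a (eidx_block t) else c (eidx_block t)).

Lemma blockv_eidx a c j k : blockv a c 0 (eidx j k) = if (k < 2)%N then a j else c j.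
Proof. by rewrite mxE eidx_blockK eidx_offsetK. Qed.

Lemma std_form_blockv a c a' c' :
  std_form (blockv a c) (blockv a' c') = - (2 * dot a a' + 3 * dot c c').
Proof.
rewrite /std_form sum_eidx /dot !mulr_sumr -big_split; congr (- _).
apply: eq_bigr => j _; rewrite !big_ord_recl big_ord0 !blockv_eidx /=.
lia.
Qed.

Lemma blockvP x :
  (forall j, x 0 (eidx j o1) = x 0 (eidx j o0)) ->
  (forall j, x 0 (eidx j o3) = x 0 (eidx j o2)) ->
  (forall j, x 0 (eidx j o4) = x 0 (eidx j o3)) ->
  x = blockv (fun j => x 0 (eidx j o0)) (fun j => x 0 (eidx j o2)).
Proof.
move=> x10 x32 x43; apply/rowP => t; rewrite -(eidx_block_offset t) blockv_eidx.
move: (eidx_block t) (eidx_offset t) => j k.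
by case: (ord5P k) => [|[|[|[|]]]] ->; rewrite /= ?x10 ?x43 ?x32.
Qed.

Lemma blockv_norm5 a c : std_form (blockv a c) (blockv a c) = -5 ->
  exists j1 j2, unit_at a j1 /\ unit_at c j2.
Proof.
rewrite std_form_blockv => aacc; have := dot_self_ge0 a; have := dot_self_ge0 c.
move=> cc_ge0 aa_ge0; have /unit_atP[j1 ?] : dot a a = 1 by lia.
have /unit_atP[j2 ?] : dot c c = 1 by lia.
by exists j1, j2.
Qed.

Lemma blockv_orth a c a' c' j1 j2 j1' j2' :
  unit_at a j1 -> unit_at c j2 -> unit_at a' j1' -> unit_at c' j2' ->
  std_form (blockv a c) (blockv a' c') = 0 -> j1 != j1' /\ j2 != j2'.
Proof.
move=> ua uc ua' uc'; rewrite std_form_blockv (dot_unit_at _ ua) (dot_unit_at _ uc).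
have := unit_at_sqr_le1 j1 ua'; have := unit_at_sqr_le1 j2 uc'.
case: ua uc ua' uc' => [a1 _] [c1 _] [a1' _] [c1' _] c'_le1 a'_le1 orth.
have [a'0 c'0] : a' j1 = 0 /\ c' j2 = 0 by nia.
by split; apply/eqP => e; [move: a1'; rewrite -e a'0 | move: c1'; rewrite -e c'0].
Qed.

Lemma blockv_unit_at a c j1 j2 : unit_at a j1 -> unit_at c j2 ->
  blockv a c = a j1 *: (std_e (eidx j1 o0) + std_e (eidx j1 o1))
             + c j2 *: (std_e (eidx j2 o2) + std_e (eidx j2 o3) + std_e (eidx j2 o4)).
Proof.
move=> [_ a0] [_ c0]; apply/rowP => t; rewrite -(eidx_block_offset t) blockv_eidx.
move: (eidx_block t) (eidx_offset t) => j k; rewrite !mxE eqxx /= !eidx_eq.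
case: (eqVneq j j1) => [<-|jj1]; rewrite ?(a0 _ jj1);
case: (eqVneq j j2) => [<-|jj2]; rewrite ?(c0 _ jj2);
(* comparisons of ordinal literals only compute once turned into [eqn] *)
by case: (ord5P k) => [|[|[|[|]]]] ->; rewrite -![_ == _ :> 'I_5]val_eqE -!eqnE /=; lia.
Qed.

End Blocks.

Section ChainFrame.

Variable m : nat.
Implicit Types (r : 'I_5 -> 'rV[int]_m) (s : 'I_5 -> 'I_m) (eps : 'I_5 -> int).

Definition chain_frame r s eps :=
  [/\ injective s, forall k, eps k ^+ 2 = 1,
      r o0 = eps o0 *: std_e (s o0) - eps o1 *: std_e (s o1),
      r o1 = eps o2 *: std_e (s o2) - eps o3 *: std_e (s o3) &
      r o2 = eps o3 *: std_e (s o3) - eps o4 *: std_e (s o4)].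

Lemma chain_frame_exists r :
  dot (r o0 0) (r o0 0) = 2 -> dot (r o1 0) (r o1 0) = 2 -> dot (r o2 0) (r o2 0) = 2 ->
  dot (r o1 0) (r o2 0) = -1 ->
  (forall t, r o0 0 t * r o1 0 t = 0) -> (forall t, r o0 0 t * r o2 0 t = 0) ->
  exists s eps, chain_frame r s eps.
Proof.
move=> r00 r11 r22 r12 r01_0 r02_0.
have [a0 [a1 r0a]] := root_exists r00.
have [a [d [f [r1d r2d af r12d]]]] := roots_dotN1 r11 r22 r12.
have [a01 r0a0 r0a1 _] := r0a; have [da r1d1 r1a1 _] := r1d; have [df r2d1 r2f1 _] := r2d.
have s_uniq : uniq [:: a0; a1; a; d; f].
  rewrite /= !inE !negb_or a01 (eq_sym a d) da af df.
  by rewrite (support_apart r0a0 r1a1) ?(support_apart r0a0 r1d1)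
    ?(support_apart r0a0 r2f1) ?(support_apart r0a1 r1a1)
    ?(support_apart r0a1 r1d1) ?(support_apart r0a1 r2f1).
exists (fun k => nth a0 [:: a0; a1; a; d; f] k).
exists (fun k => nth 0 [:: r o0 0 a0; - r o0 0 a1; r o1 0 a; - r o1 0 d; - r o2 0 f] k).
split=> /=.
- by move=> k l /eqP; rewrite nth_uniq // => /eqP/val_inj.
- by move=> k; case: (ord5P k) => [|[|[|[|]]]] -> /=; rewrite ?sqrrN.
- by rewrite [LHS](row_root_onE r0a) scaleNr opprK.
- by rewrite [LHS](row_root_onE r1d) scaleNr opprK addrC.
have r2d_eq : r o2 0 d = - r o1 0 d by move: r12d r1d1; clear; nia.
by rewrite [LHS](row_root_onE r2d) r2d_eq !scaleNr opprK.
Qed.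

Lemma chain_frame_support r s eps k : chain_frame r s eps ->
  exists2 c : 'I_5, (c < 3)%N & r c 0 (s k) != 0.
Proof.
case=> s_inj eps1 r0 r1 r2.
have eps_neq0 l : eps l != 0 by rewrite -sqrf_eq0 eps1 oner_eq0.
have s_neq l l' : l != l' -> s l != s l' by rewrite (inj_eq s_inj).
case: (ord5P k) => [|[|[|[|]]]] ->.
- by exists o0; rewrite // r0 scale_e_sub_entryl ?s_neq.
- by exists o0; rewrite // r0 scale_e_sub_entryr ?s_neq ?oppr_eq0.
- by exists o1; rewrite // r1 scale_e_sub_entryl ?s_neq.
- by exists o1; rewrite // r1 scale_e_sub_entryr ?s_neq ?oppr_eq0.
- by exists o2; rewrite // r2 scale_e_sub_entryr ?s_neq ?oppr_eq0.
Qed.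

End ChainFrame.

Definition plumbQn b n (i j : 'I_n) (k l : 'I_5) : int :=
  if i == j then plumbQ b k l else 0.

Definition plumbQn_isometry b n m (rho : 'I_n -> 'I_5 -> 'rV[int]_m) :=
  forall i j k l, std_form (rho i k) (rho j l) = plumbQn b i j k l.

Section Embedding.

Variables (b n m : nat) (rho : 'I_n -> 'I_5 -> 'rV[int]_m).
Implicit Types (i j h : 'I_n) (k l z : 'I_5) (t : 'I_m).
Hypothesis rho_form : plumbQn_isometry b rho.

Lemma dot_rho i j k l : dot (rho i k 0) (rho j l 0) = - plumbQn b i j k l.
Proof. by rewrite -rho_form opprK. Qed.

Lemma chain_root i k : (k < 3)%N -> dot (rho i k 0) (rho i k 0) = 2.
Proof.
rewrite dot_rho /plumbQn eqxx.
by case: (ord5P k) => [|[|[|[|]]]] -> // _; rewrite /plumbQ mxE.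
Qed.

Lemma rho_supports_disjoint i j k l h z t : (k < 3)%N -> (l < 3)%N ->
  plumbQn b i j k l = 0 -> ~~ (2 %| plumbQn b h i z k + plumbQn b h j z l)%Z ->
  rho i k 0 t * rho j l 0 t = 0.
Proof.
move=> k_lt l_lt ikjl odd_hz; apply: (roots_disjoint (z := rho h z 0)).
- exact: chain_root.
- exact: chain_root.
- by rewrite dot_rho ikjl oppr0.
- by rewrite !dot_rho -opprD rpredN.
Qed.

Lemma rho_chain_disjoint i j k l t : i != j -> (k < 3)%N -> (l < 3)%N ->
  rho i k 0 t * rho j l 0 t = 0.
Proof.
move=> ij k_lt l_lt; have Qij z l' : plumbQn b i j z l' = 0 by rewrite /plumbQn (negbTE ij).
have [z zk] : exists z, plumbQ b z k = 1.
  by case: (ord5P k) k_lt => [|[|[|[|]]]] -> // _; [exists o4 | exists o2 | exists o4];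
    rewrite /plumbQ mxE.
by apply: (rho_supports_disjoint (h := i) (z := z)); rewrite // !Qij /plumbQn eqxx zk.
Qed.

Lemma rho_chain_frame i : exists s eps, chain_frame (rho i) s eps.
Proof.
apply: chain_frame_exists; rewrite ?chain_root //.
- by rewrite dot_rho /plumbQn eqxx /plumbQ mxE.
- move=> t; apply: (rho_supports_disjoint (h := i) (z := o4));
  by rewrite // /plumbQn eqxx /plumbQ !mxE.
- move=> t; apply: (rho_supports_disjoint (h := i) (z := o1));
  by rewrite // /plumbQn eqxx /plumbQ !mxE.
Qed.

Lemma rho_frames : exists (S : 'I_n -> 'I_5 -> 'I_m) (E : 'I_n -> 'I_5 -> int),
  (forall i, chain_frame (rho i) (S i) (E i)) /\
  forall i j k l, S i k = S j l -> i = j /\ k = l.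
Proof.
have [S /fin_all_exists[E frameS]] := fin_all_exists rho_chain_frame.
exists S, E; split=> // i j k l eS; have [eij|ij] := eqVneq i j.
  by subst j; have [S_inj _ _ _ _] := frameS i; split=> //; apply: S_inj.
have [c c_lt rc] := chain_frame_support k (frameS i).
have [c' c'_lt rc'] := chain_frame_support l (frameS j).
by move: rc; rewrite eS => rc; have /eqP := rho_chain_disjoint (S j l) ij c_lt c'_lt;
  rewrite mulf_eq0 (negbTE rc) (negbTE rc').
Qed.

End Embedding.

Definition standard_chains n (rho : 'I_n -> 'I_5 -> 'rV[int]_(5 * n)) P :=
  forall i, [/\ rho i o0 *m P = std_e (eidx i o0) - std_e (eidx i o1),
                rho i o1 *m P = std_e (eidx i o2) - std_e (eidx i o3) &
                rho i o2 *m P = std_e (eidx i o3) - std_e (eidx i o4)].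

Lemma sgn_eqN1 (x : int) : x ^+ 2 = 1 -> sgn (x == -1) = x.
Proof. by move/eqP; rewrite sqrf_eq1 => /orP[] /eqP->. Qed.

Lemma standard_chains_aut b n (rho : 'I_n -> 'I_5 -> 'rV[int]_(5 * n)) :
  plumbQn_isometry b rho -> exists P, std_lattice_aut P /\ standard_chains rho P.
Proof.
move=> rho_form; have [S [E [frameS S_inj]]] := rho_frames rho_form.
have [pi piE] := eidx_perm S_inj.
pose eps t := E (eidx_block t) (eidx_offset t).
have E1 i k : E i k ^+ 2 = 1 by have [_ ->] := frameS i.
have eps1 t : eps t ^+ 2 = 1 by apply: E1.
exists (signed_perm_mx pi eps); split.
  exact/std_lattice_aut_orthogonal/signed_perm_mx_orthogonal.
have eP i k : std_e (S i k) *m signed_perm_mx pi eps = E i k *: std_e (eidx i k).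
  by rewrite -piE std_e_mul_signed_perm /eps eidx_blockK eidx_offsetK.
move=> i; have [_ _ -> -> ->] := frameS i.
by rewrite !mulmxBl -!scalemxAl !eP !scalerA -!expr2 !E1 !scale1r.
Qed.

Lemma standard_chains_v4 b n (rho : 'I_n -> 'I_5 -> 'rV[int]_(5 * n)) P :
  plumbQn_isometry b rho -> std_lattice_aut P -> standard_chains rho P ->
  exists (s1 s2 : 'I_n -> bool) (sigma1 sigma2 : 'S_n), forall i,
    rho i o3 *m P =
      sgn (s1 i) *: (std_e (eidx (sigma1 i) o0) + std_e (eidx (sigma1 i) o1))
    + sgn (s2 i) *: (std_e (eidx (sigma2 i) o2) + std_e (eidx (sigma2 i) o3)
                     + std_e (eidx (sigma2 i) o4)).
Proof.
move=> rho_form [_ P_form] chainP; pose y i := rho i o3 *m P.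
pose a i j : int := y i 0 (eidx j o0); pose c i j : int := y i 0 (eidx j o2).
have y_orth i j (k : 'I_5) : (k < 3)%N -> std_form (y i) (rho j k *m P) = 0.
  rewrite P_form rho_form /plumbQn; case: (i == j) => //.
  by case: (ord5P k) => [|[|[|[|]]]] -> //; rewrite /plumbQ mxE.
have yE i : y i = blockv (a i) (c i).
  have y_eq j (k : 'I_5) (p q : 'I_(5 * n)) :
      (k < 3)%N -> rho j k *m P = std_e p - std_e q -> y i 0 q = y i 0 p.
    by move=> k_lt rhoP; apply/eqP; rewrite -subr_eq0 -std_form_e_sub -rhoP y_orth.
  apply: blockvP => j; have [e0 e1 e2] := chainP j.
  - exact: y_eq e0.
  - exact: y_eq e1.
  - exact: y_eq e2.
have y_form i j : std_form (y i) (y j) = if i == j then -5 else 0.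
  by rewrite P_form rho_form /plumbQn; case: (i == j) => //; rewrite /plumbQ mxE.
have /fin_all_exists[J units] i : exists J : 'I_n * 'I_n,
    unit_at (a i) J.1 /\ unit_at (c i) J.2.
  have /blockv_norm5[j1 [j2 ?]] : std_form (blockv (a i) (c i)) (blockv (a i) (c i)) = -5.
    by rewrite -yE y_form eqxx.
  by exists (j1, j2).
have J_apart i i' : i != i' -> (J i).1 != (J i').1 /\ (J i).2 != (J i').2.
  move=> ii'; have [ua uc] := units i; have [ua' uc'] := units i'.
  by apply: blockv_orth ua uc ua' uc' _; rewrite -!yE y_form (negbTE ii').
have J1_inj : injective (fun i => (J i).1).
  by move=> i i' /eqP; apply: contraTeq => /J_apart[].
have J2_inj : injective (fun i => (J i).2).
  by move=> i i' /eqP; apply: contraTeq => /J_apart[].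
exists (fun i => a i (J i).1 == -1), (fun i => c i (J i).2 == -1).
exists (perm J1_inj), (perm J2_inj) => i; have [ua uc] := units i.
rewrite !permE !sgn_eqN1; [|by case: uc|by case: ua].
by rewrite -(blockv_unit_at ua uc) -yE.
Qed.

Unset Implicit Arguments.

Theorem mainTheorem14 (b n : nat) (hb : (2 <= b)%N)
  (rho : 'I_n -> 'I_5 -> 'rV[int]_(5 * n)) :
  lattice_embedding_Qn b rho ->
  exists (P : 'M[int]_(5 * n)) (s1 : 'I_n -> bool) (s2 : 'I_n -> bool)
         (sigma1 sigma2 : 'S_n),
    std_lattice_aut P /\
    forall i : 'I_n,
      [/\ rho i o0 *m P = std_e (eidx i o0) - std_e (eidx i o1),
          rho i o1 *m P = std_e (eidx i o2) - std_e (eidx i o3),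
          rho i o2 *m P = std_e (eidx i o3) - std_e (eidx i o4) &
          rho i o3 *m P =
            sgn (s1 i) *: (std_e (eidx (sigma1 i) o0) + std_e (eidx (sigma1 i) o1))
          + sgn (s2 i) *: (std_e (eidx (sigma2 i) o2) + std_e (eidx (sigma2 i) o3)
                           + std_e (eidx (sigma2 i) o4))].
Proof.
case=> _ rho_form; have [P [P_aut chainP]] := standard_chains_aut rho_form.
have [s1 [s2 [sigma1 [sigma2 v4P]]]] := standard_chains_v4 rho_form P_aut chainP.
exists P, s1, s2, sigma1, sigma2; split=> // i.
by have [-> -> ->] := chainP i; rewrite v4P.
Qed.
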